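(* Let $A=\{A_m\}_{m=1}^{\mathsf{p}}\subset\mathcal{B}(\mathbb{C}^{D_1})$ and $B=\{B_m\}_{m=1}^{\mathsf{p}}\subset\mathcal{B}(\mathbb{C}^{D_2})$, and let $E_1=\sum_m\overline{A_m}\otimes A_m$, $E_2=\sum_m\overline{B_m}\otimes B_m$. Let $\psi_1\in \mathbb{C}^{D_1}$ and $\psi_2\in\mathbb{C}^{D_2}$ be unit vectors. Then for all $d\ge1$ and all $F\in\mathcal{B}((\mathbb{C}^{\mathsf{p}})^{\otimes d})$, \[ \|(E_F)^{\dagger} (\psi_1\otimes\psi_2)\| \leq \|F\| \sqrt{\|E_1^d\|\,\|E_2^d\|},\qquad \|E_F (\psi_1\otimes\psi_2)\| \leq \|F\| \sqrt{\|E_1^d\|\,\|E_2^d\|}, \] \[ \|E_F\|_F \leq D_1D_2 \|F\| \sqrt{\|E_1^d\|\,\|E_2^d\|}. \]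
   Context: For $Z\in\mathcal{B}(\mathbb{C}^\mathsf{p})$ define $E_Z=\sum_{m,m'=1}^{\mathsf{p}}\langle m|Z|m'\rangle\,\overline{A_m}\otimes B_{m'}\in\mathcal{B}(\mathbb{C}^{D_1}\otimes\mathbb{C}^{D_2})$ (overline denotes entrywise complex conjugation in the standard basis), and for $Z_1,\dots,Z_d\in\mathcal{B}(\mathbb{C}^\mathsf{p})$ set $E_{Z_1\otimes\cdots\otimes Z_d}=E_{Z_1}E_{Z_2}\cdots E_{Z_d}$; extend linearly to define $E_F$ for all $F\in\mathcal{B}((\mathbb{C}^\mathsf{p})^{\otimes d})$. $\|\cdot\|$ denotes the operator norm (Euclidean norm for vectors) and $\|\cdot\|_F$ the Frobenius norm. *)

From HB Require Import structures.
From mathcomp Require Import all_boot all_order all_algebra.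
From mathcomp Require Import all_classical all_reals.
From mathcomp Require Import complex mxtens.
Set Implicit Arguments. Unset Strict Implicit. Unset Printing Implicit Defensive.
Import Order.TTheory GRing.Theory Num.Theory.
Local Open Scope ring_scope.
Local Open Scope complex_scope.

Section Defs.
Variable R : realType.
Local Notation C := R[i].

Definition abs2 (z : C) : R := complex.Re z ^+ 2 + complex.Im z ^+ 2.

(* Frobenius norm; on column vectors 'cV_n = 'M_(n,1) it is the Euclidean norm *)
Definition fnorm {m n : nat} (M : 'M[C]_(m, n)) : R :=
  Num.sqrt (\sum_(i < m) \sum_(j < n) abs2 (M i j)).

Definition opnorm {m n : nat} (M : 'M[C]_(m, n)) : R :=
  sup [set fnorm (M *m v) | v in [set v : 'cV[C]_n | fnorm v = 1]]%classic.

Definition conjmx {m n : nat} (M : 'M[C]_(m, n)) : 'M[C]_(m, n) := map_mx conjc M.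
Definition adjmx {m n : nat} (M : 'M[C]_(m, n)) : 'M[C]_(n, m) := (conjmx M)^T.

(* basis labels of (C^p)^{(x) d}: multi-indices (m_1,...,m_d) *)
Lemma card_multi_index (p d : nat) : #|{ffun 'I_d -> 'I_p}| = (p ^ d)%N.
Proof. by rewrite card_ffun !card_ord. Qed.

Definition midx {p d : nat} (m : {ffun 'I_d -> 'I_p}) : 'I_(p ^ d)%N :=
  cast_ord (card_multi_index p d) (enum_rank m).

(* E_F = sum_{m,m'} F_{m,m'} (conj A_{m_1} (x) B_{m'_1}) ... (conj A_{m_d} (x) B_{m'_d}),
   the linear extension of E_{Z_1 (x) ... (x) Z_d} = E_{Z_1} ... E_{Z_d}. *)
Definition EF {p D1 D2 d : nat} (A : 'I_p -> 'M[C]_D1) (B : 'I_p -> 'M[C]_D2)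
    (F : 'M[C]_(p ^ d)%N) : 'M[C]_(D1 * D2) :=
  \sum_(m : {ffun 'I_d -> 'I_p}) \sum_(m' : {ffun 'I_d -> 'I_p})
     F (midx m) (midx m') *: \prod_(k < d) (conjmx (A (m k)) *t B (m' k)).

Definition transfer {p D : nat} (A : 'I_p -> 'M[C]_D) : 'M[C]_(D * D) :=
  \sum_(m < p) conjmx (A m) *t A m.

End Defs.

From Pilot Require Import Defs.
From HB Require Import structures.
From mathcomp Require Import all_boot all_order all_algebra.
From mathcomp Require Import all_classical all_reals.
From mathcomp Require Import complex mxtens.
From mathcomp Require Import ring.
Import Order.TTheory GRing.Theory Num.Theory.
Local Open Scope ring_scope.

(* Let A_i, B_j be the products of the A_m, B_m along the multi-indices i, j,
   and U, V the matrices with columns a_i = A_i conj(psi1), b_j = B_j psi2.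
   Then E_F (psi1 ⊗ psi2) is the vectorisation of W = conj(U) F V^T, so
   |W|_F^2 = tr(F^* G F H) with the Gram matrices G = U^T conj(U) and
   H = V^T conj(V), and Cauchy-Schwarz for the trace gives
   |W|_F^4 <= |F|^4 |G|_F^2 |H|_F^2.  Now |G|_F = |conj(U) U^T|_F is the norm
   of sum_i conj(a_i) ⊗ a_i = E_1^d (psi1 ⊗ conj(psi1)), at most |E_1^d|, and
   likewise for H.  The bound for (E_F)^* is the same statement for the
   families A_m^*, B_m^* and conj(F); the Frobenius bound follows column by
   column. *)

Set Implicit Arguments.
Unset Strict Implicit.

(* Unqualified, [conjmx] refers to the change of basis [V *m f *m pinvmx V] of mxred. *)
Local Notation conjmx := Defs.conjmx.
Local Notation "x %:C" := (x%:C)%C.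

Lemma ler_mul_sqrt_exp4 (R : rcfType) (x o a b : R) :
  0 <= x -> 0 <= o -> 0 <= a -> 0 <= b ->
  x ^+ 4 <= o ^+ 4 * a ^+ 2 * b ^+ 2 -> x <= o * Num.sqrt (a * b).
Proof.
move=> x0 o0 a0 b0 x4_le.
rewrite -(ler_pXn2r (isT : (0 < 4)%N)) ?nnegrE ?mulr_ge0 ?sqrtr_ge0 //.
suff -> : (o * Num.sqrt (a * b)) ^+ 4 = o ^+ 4 * a ^+ 2 * b ^+ 2 by [].
by rewrite exprMn (exprM (Num.sqrt (a * b)) 2 2) sqr_sqrtr ?mulr_ge0 // exprMn mulrA.
Qed.

Lemma CauchySchwarz_sum (C : numClosedFieldType) (I : finType) (x y : I -> C) :
  `|\sum_i x i * (y i)^*| ^+ 2 <= (\sum_i `|x i| ^+ 2) * (\sum_i `|y i| ^+ 2).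
Proof.
pose rV (z : I -> C) := \row_(k < #|I|) z (enum_val k).
have sum_rV (z w : I -> C) :
    \sum_k rV z 0 k * ((rV w) ^t* )%sesqui k 0 = \sum_i z i * (w i)^*.
  rewrite (reindex (@enum_rank I)) /=; last first.
    by exists enum_val => i _; rewrite ?enum_rankK ?enum_valK.
  by apply: eq_bigr => i _; rewrite !mxE enum_rankK.
have : `|dotmx (rV x) (rV y)| ^+ 2 <= dotmx (rV x) (rV x) * dotmx (rV y) (rV y).
  exact: (CauchySchwarz (@dotmx C #|I|) _ _).1.
rewrite !dotmxE !mxE !sum_rV.
by rewrite !(eq_bigr _ (fun i _ => esym (normCK _))).
Qed.

Lemma sum_mxtens_index (V : nmodType) m n (G : 'I_(m * n) -> V) :
  \sum_k G k = \sum_(r < m) \sum_(s < n) G (mxtens_index (r, s)).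
Proof.
rewrite pair_big /=; apply: (reindex (fun rs : 'I_m * 'I_n => mxtens_index (rs.1, rs.2))).
by exists (@mxtens_unindex m n) => [[r s] _|k _]; rewrite ?mxtens_indexK ?mxtens_unindexK.
Qed.

Lemma tensmx11 (K : comPzRingType) m n : (1%:M : 'M[K]_m) *t (1%:M : 'M[K]_n) = 1%:M.
Proof.
apply/matrixP => k l; case: (mxtens_indexP k) => i j; case: (mxtens_indexP l) => i' j'.
rewrite tensmxE !mxE (inj_eq (can_inj (@mxtens_indexK m n))) xpair_eqE.
by rewrite -natrM mulnb.
Qed.

Lemma tensmx_prod (K : comPzRingType) m n d (X : 'I_d -> 'M[K]_m) (Y : 'I_d -> 'M[K]_n) :
  \prod_(k < d) (X k *t Y k) = (\prod_(k < d) X k) *t (\prod_(k < d) Y k).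
Proof.
elim: d X Y => [|d IH] X Y; first by rewrite !big_ord0 tensmx11.
by rewrite !big_ord_recr /= IH -!mulmxE tensmx_mul.
Qed.

Lemma tensmx_delta (K : comPzRingType) m n (r : 'I_m) (s : 'I_n) :
  (delta_mx r 0 : 'cV[K]_m) *t (delta_mx s 0 : 'cV[K]_n) = delta_mx (mxtens_index (r, s)) 0.
Proof.
apply/matrixP => i j; case: (mxtens_indexP i) => i1 i2; case: (@mxtens_indexP 1 1 j) => j1 j2.
rewrite !mxE !mxtens_indexK /= [j1]ord1 [j2]ord1 eqxx !andbT.
by rewrite (inj_eq (can_inj (@mxtens_indexK m n))) xpair_eqE -natrM mulnb.
Qed.

Section Adjoint.
Variable R : realType.
Local Notation C := R[i].

Lemma conjmxE m n (M : 'M[C]_(m, n)) i j : conjmx M i j = (M i j)^*.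
Proof. exact: mxE. Qed.

Lemma adjmxE m n (M : 'M[C]_(m, n)) i j : adjmx M i j = (M j i)^*.
Proof. by rewrite !mxE. Qed.

Lemma conjmx_invol m n (M : 'M[C]_(m, n)) : conjmx (conjmx M) = M.
Proof. by apply/matrixP => i j; rewrite !conjmxE conjCK. Qed.

Lemma adjmx_invol m n (M : 'M[C]_(m, n)) : adjmx (adjmx M) = M.
Proof. by apply/matrixP => i j; rewrite !adjmxE conjCK. Qed.

Lemma adjmx_conj m n (M : 'M[C]_(m, n)) : adjmx (conjmx M) = M^T.
Proof. by apply/matrixP => i j; rewrite adjmxE conjmxE mxE conjCK. Qed.

Lemma conjmx_adj m n (M : 'M[C]_(m, n)) : conjmx (adjmx M) = M^T.
Proof. by apply/matrixP => i j; rewrite conjmxE adjmxE mxE conjCK. Qed.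

Lemma adjmx_tr m n (M : 'M[C]_(m, n)) : adjmx M^T = conjmx M.
Proof. by apply/matrixP => i j; rewrite adjmxE conjmxE mxE. Qed.

Lemma conjmx_mul m n k (M : 'M[C]_(m, n)) (N : 'M[C]_(n, k)) :
  conjmx (M *m N) = conjmx M *m conjmx N.
Proof. exact: map_mxM. Qed.

Lemma adjmx_mul m n k (M : 'M[C]_(m, n)) (N : 'M[C]_(n, k)) :
  adjmx (M *m N) = adjmx N *m adjmx M.
Proof. by rewrite /adjmx conjmx_mul trmx_mul. Qed.

Lemma conjmx_prod n d (X : 'I_d -> 'M[C]_n) :
  conjmx (\prod_(k < d) X k) = \prod_(k < d) conjmx (X k).
Proof.
elim: d X => [|d IH] X.
  by rewrite !big_ord0; apply/matrixP => i j; rewrite conjmxE !mxE rmorph_nat.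
by rewrite !big_ord_recr /= -IH -!mulmxE conjmx_mul.
Qed.

Lemma conjmx_tens m n p q (X : 'M[C]_(m, n)) (Y : 'M[C]_(p, q)) :
  conjmx (X *t Y) = conjmx X *t conjmx Y.
Proof. exact: map_mxT. Qed.

Lemma adjmx_tens m n p q (X : 'M[C]_(m, n)) (Y : 'M[C]_(p, q)) :
  adjmx (X *t Y) = adjmx X *t adjmx Y.
Proof. by rewrite /adjmx conjmx_tens trmx_tens. Qed.

Lemma adjmx_scale m n c (M : 'M[C]_(m, n)) : adjmx (c *: M) = c^* *: adjmx M.
Proof. by apply/matrixP => i j; rewrite adjmxE [in RHS]mxE adjmxE mxE rmorphM. Qed.

Lemma adjmx_sum (I : finType) m n (G : I -> 'M[C]_(m, n)) :
  adjmx (\sum_i G i) = \sum_i adjmx (G i).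
Proof.
apply/matrixP => k l; rewrite adjmxE !summxE rmorph_sum.
by apply: eq_bigr => i _; rewrite adjmxE.
Qed.

End Adjoint.

Section FrobeniusNorm.
Variable R : realType.
Local Notation C := R[i].

(* The squared Frobenius norm is kept in R[i], where the Cauchy-Schwarz
   inequality of the sesquilinear library lives. *)
Definition fnorm2 {m n} (M : 'M[C]_(m, n)) : C := \sum_i \sum_j `|M i j| ^+ 2.

Lemma fnorm_ge0 m n (M : 'M[C]_(m, n)) : 0 <= fnorm M.
Proof. exact: sqrtr_ge0. Qed.

Lemma fnorm2_ge0 m n (M : 'M[C]_(m, n)) : 0 <= fnorm2 M.
Proof. by apply: sumr_ge0 => i _; apply: sumr_ge0 => j _; rewrite exprn_ge0. Qed.

Lemma sqr_fnorm m n (M : 'M[C]_(m, n)) : (fnorm M ^+ 2)%:C = fnorm2 M.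
Proof.
rewrite /fnorm sqr_sqrtr; last first.
  by apply: sumr_ge0 => i _; apply: sumr_ge0 => j _; rewrite addr_ge0 ?sqr_ge0.
rewrite rmorph_sum; apply: eq_bigr => i _; rewrite rmorph_sum.
by apply: eq_bigr => j _; exact: add_Re2_Im2.
Qed.

Lemma ler_fnorm m n m' n' (M : 'M[C]_(m, n)) (N : 'M[C]_(m', n')) :
  fnorm2 M <= fnorm2 N -> fnorm M <= fnorm N.
Proof. by rewrite -!sqr_fnorm lecR ler_pXn2r ?nnegrE ?sqrtr_ge0. Qed.

Lemma fnorm2_eq0 m n (M : 'M[C]_(m, n)) : fnorm2 M = 0 -> M = 0.
Proof.
move=> M0; apply/matrixP => i j; rewrite mxE.
have /psumr_eq0P row0 : \sum_j `|M i j| ^+ 2 = 0.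
  apply: (psumr_eq0P _ M0) => // k _.
  by apply: sumr_ge0 => l _; exact: exprn_ge0.
by apply/eqP; rewrite -normr_eq0 -(sqrf_eq0 `|_|) row0 // => k _; rewrite exprn_ge0.
Qed.

Lemma fnorm_eq0 m n (M : 'M[C]_(m, n)) : fnorm M = 0 -> M = 0.
Proof. by move=> M0; apply: fnorm2_eq0; rewrite -sqr_fnorm M0 expr0n. Qed.

Lemma fnorm0 m n : fnorm (0 : 'M[C]_(m, n)) = 0.
Proof.
rewrite /fnorm big1 ?sqrtr0 // => i _; rewrite big1 // => j _.
by rewrite mxE /abs2 /= expr0n addr0.
Qed.

Lemma fnorm2_unit n (v : 'cV[C]_n) : fnorm v = 1 -> fnorm2 v = 1.
Proof. by move=> v1; rewrite -sqr_fnorm v1 expr1n. Qed.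

Lemma fnormZ m n (a : R) (M : 'M[C]_(m, n)) : fnorm (a%:C *: M) = `|a| * fnorm M.
Proof.
rewrite /fnorm -sqrtr_sqr -sqrtrM ?sqr_ge0 // mulr_sumr; congr Num.sqrt.
apply: eq_bigr => i _; rewrite mulr_sumr; apply: eq_bigr => j _.
by rewrite mxE /abs2; case: (M i j) => x y /=; ring.
Qed.

Lemma fnorm_delta n (r : 'I_n) : fnorm (delta_mx r 0 : 'cV[C]_n) = 1.
Proof.
rewrite /fnorm (bigD1 r) //= big_ord1 big1 => [|i /negbTE ne].
  by rewrite mxE !eqxx /abs2 /= expr1n expr0n addr0 addr0 sqrtr1.
by rewrite big_ord1 mxE ne /abs2 /= expr0n addr0.
Qed.

Lemma fnorm2_cV n (v : 'cV[C]_n) : fnorm2 v = \sum_i `|v i 0| ^+ 2.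
Proof. by apply: eq_bigr => i _; rewrite big_ord1. Qed.

Lemma fnorm2_col m n (M : 'M[C]_(m, n)) : fnorm2 M = \sum_j fnorm2 (col j M).
Proof.
rewrite /fnorm2 exchange_big; apply: eq_bigr => j _; apply: eq_bigr => i _.
by rewrite big_ord1 mxE.
Qed.

Lemma fnorm2_tens m n p q (X : 'M[C]_(m, n)) (Y : 'M[C]_(p, q)) :
  fnorm2 (X *t Y) = fnorm2 X * fnorm2 Y.
Proof.
rewrite /fnorm2 sum_mxtens_index mulr_suml; apply: eq_bigr => r _.
rewrite mulr_sumr; apply: eq_bigr => s _.
rewrite sum_mxtens_index mulr_suml; apply: eq_bigr => i _.
rewrite mulr_sumr; apply: eq_bigr => j _.
by rewrite tensmxE normrM exprMn.
Qed.

Lemma fnorm2_conj m n (M : 'M[C]_(m, n)) : fnorm2 (conjmx M) = fnorm2 M.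
Proof. by apply: eq_bigr => i _; apply: eq_bigr => j _; rewrite conjmxE norm_conjC. Qed.

Lemma fnorm2_adj m n (M : 'M[C]_(m, n)) : fnorm2 (adjmx M) = fnorm2 M.
Proof.
rewrite /fnorm2 exchange_big; apply: eq_bigr => i _; apply: eq_bigr => j _.
by rewrite adjmxE norm_conjC.
Qed.

Lemma fnorm2_mxtrace m n (M : 'M[C]_(m, n)) : fnorm2 M = \tr (adjmx M *m M).
Proof.
rewrite /fnorm2 /mxtrace exchange_big; apply: eq_bigr => j _; rewrite mxE.
by apply: eq_bigr => i _; rewrite adjmxE normCKC.
Qed.

Lemma normC_mxtrace_mul_le m n (X : 'M[C]_(m, n)) (Y : 'M[C]_(n, m)) :
  `|\tr (X *m Y)| ^+ 2 <= fnorm2 X * fnorm2 Y.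
Proof.
have trE : \tr (X *m Y) = \sum_(ij : 'I_m * 'I_n) X ij.1 ij.2 * (Y ij.2 ij.1)^*^*.
  rewrite /mxtrace; under eq_bigr do rewrite mxE.
  by rewrite pair_bigA; apply: eq_bigr => ij _; rewrite conjCK.
rewrite trE /fnorm2 [X in _ * X]exchange_big !pair_bigA /=.
under [X in _ * X]eq_bigr do rewrite -[`|_|]norm_conjC.
exact: CauchySchwarz_sum.
Qed.

Lemma fnorm2_mul_adjmx m n (M : 'M[C]_(m, n)) :
  fnorm2 (M *m adjmx M) = fnorm2 (adjmx M *m M).
Proof.
rewrite !fnorm2_mxtrace !adjmx_mul !adjmx_invol !mulmxA.
by rewrite mxtrace_mulC !mulmxA.
Qed.

Lemma fnorm2_mulmx_le m n (M : 'M[C]_(m, n)) (v : 'cV[C]_n) :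
  fnorm2 (M *m v) <= fnorm2 M * fnorm2 v.
Proof.
rewrite !fnorm2_cV /fnorm2 mulr_suml; apply: ler_sum => i _; rewrite mxE.
have := CauchySchwarz_sum (fun j => M i j) (fun j => (v j 0)^*).
by under eq_bigr do rewrite conjCK; under [X in _ * X]eq_bigr do rewrite norm_conjC.
Qed.

Lemma fnorm_le_col m n (M : 'M[C]_(m, n)) (c : R) :
  0 <= c -> (forall j, fnorm (col j M) <= c) -> fnorm M <= n%:R * c.
Proof.
move=> c0 Mc; rewrite -(ler_pXn2r (ltn0Sn 1)) ?nnegrE ?mulr_ge0 ?fnorm_ge0 //.
rewrite -lecR sqr_fnorm fnorm2_col.
apply: (@le_trans _ _ (\sum_(j < n) (c ^+ 2)%:C)).
  apply: ler_sum => j _; rewrite -sqr_fnorm lecR ler_pXn2r ?nnegrE ?fnorm_ge0 //.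
rewrite sumr_const card_ord -rmorphMn lecR exprMn -mulr_natl ler_wpM2r ?sqr_ge0 //.
by rewrite -natrX ler_nat; case: n {M Mc} => // n; rewrite leq_pmulr.
Qed.

End FrobeniusNorm.

Section OperatorNorm.
Variable R : realType.
Local Notation C := R[i].

Definition opbound2 {m n} (M : 'M[C]_(m, n)) (c : C) :=
  forall x : 'cV[C]_n, fnorm2 (M *m x) <= c * fnorm2 x.

Lemma opbound2_mulmx m n k (M : 'M[C]_(m, n)) c (X : 'M[C]_(n, k)) :
  opbound2 M c -> fnorm2 (M *m X) <= c * fnorm2 X.
Proof.
move=> Mc; rewrite !fnorm2_col mulr_sumr; apply: ler_sum => j _.
by rewrite !colE -mulmxA; apply: Mc.
Qed.

Lemma opbound2_mulmxr m n k (M : 'M[C]_(m, n)) c (X : 'M[C]_(k, m)) :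
  opbound2 (adjmx M) c -> fnorm2 (X *m M) <= c * fnorm2 X.
Proof.
by move=> Mc; rewrite -fnorm2_adj adjmx_mul -[fnorm2 X]fnorm2_adj; exact: opbound2_mulmx.
Qed.

Lemma opbound2_conjmx m n (M : 'M[C]_(m, n)) c : opbound2 M c -> opbound2 (conjmx M) c.
Proof.
move=> Mc x; rewrite -[x in conjmx M *m x]conjmx_invol -conjmx_mul fnorm2_conj.
by rewrite -[fnorm2 x]fnorm2_conj; exact: Mc.
Qed.

Lemma opbound2_adjmx m n (M : 'M[C]_(m, n)) c :
  0 <= c -> opbound2 M c -> opbound2 (adjmx M) c.
Proof.
move=> c0 Mc y; set z := adjmx M *m y.
(* |z|^2 = <M z, y>, then Cauchy-Schwarz *)
have z2 : fnorm2 z ^+ 2 <= (c * fnorm2 y) * fnorm2 z.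
  have zE : fnorm2 z = \tr (adjmx y *m (M *m z)).
    by rewrite fnorm2_mxtrace {1}/z adjmx_mul adjmx_invol mulmxA.
  rewrite -[X in X ^+ 2]ger0_norm ?fnorm2_ge0 // {1}zE.
  apply: le_trans (normC_mxtrace_mul_le _ _) _.
  by rewrite fnorm2_adj mulrC mulrAC ler_wpM2r ?fnorm2_ge0 // mulrC.
have [->|zn0] := eqVneq (fnorm2 z) 0; first by rewrite mulr_ge0 ?fnorm2_ge0.
by move: z2; rewrite expr2 ler_pM2r // lt_def zn0 fnorm2_ge0.
Qed.

Lemma opnorm_ub m n (M : 'M[C]_(m, n)) (v : 'cV[C]_n) :
  fnorm v = 1 -> fnorm (M *m v) <= opnorm M.
Proof.
move=> v1; apply: ub_le_sup; last by exists v.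
exists (fnorm M) => _ [w /= w1 <-]; apply: ler_fnorm.
by have := fnorm2_mulmx_le M w; rewrite (fnorm2_unit w1) mulr1.
Qed.

Lemma opnorm_no_unit m n (M : 'M[C]_(m, n)) :
  ~ (exists v : 'cV[C]_n, fnorm v = 1) -> opnorm M = 0.
Proof.
move=> nov; rewrite /opnorm.
suff -> : [set fnorm (M *m v) | v in [set v : 'cV[C]_n | fnorm v = 1]]%classic = set0.
  exact: sup0.
by apply/seteqP; split => // t [v v1 _]; case: nov; exists v.
Qed.

Lemma opnorm_ge0 m n (M : 'M[C]_(m, n)) : 0 <= opnorm M.
Proof.
have [[v v1]|nov] := pselect (exists v : 'cV[C]_n, fnorm v = 1).
  exact: le_trans (fnorm_ge0 _) (opnorm_ub M v1).
by rewrite opnorm_no_unit.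
Qed.

Lemma fnorm_mulmx_le m n (M : 'M[C]_(m, n)) (x : 'cV[C]_n) :
  fnorm (M *m x) <= opnorm M * fnorm x.
Proof.
have [x0|xn0] := eqVneq (fnorm x) 0.
  by rewrite (fnorm_eq0 x0) mulmx0 !fnorm0 mulr0.
have xpos : 0 < fnorm x by rewrite lt_def xn0 fnorm_ge0.
have u1 : fnorm ((fnorm x)^-1%:C *: x) = 1.
  by rewrite fnormZ ger0_norm ?invr_ge0 ?fnorm_ge0 // mulVf.
have := opnorm_ub M u1.
by rewrite -scalemxAr fnormZ ger0_norm ?invr_ge0 ?fnorm_ge0 // mulrC ler_pdivrMr.
Qed.

Lemma opbound2_opnorm m n (M : 'M[C]_(m, n)) : opbound2 M (opnorm M ^+ 2)%:C.
Proof.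
move=> x; rewrite -!sqr_fnorm -rmorphM lecR -exprMn.
by rewrite ler_pXn2r ?nnegrE ?mulr_ge0 ?opnorm_ge0 ?fnorm_ge0 ?fnorm_mulmx_le.
Qed.

Lemma opnorm_le m n (M : 'M[C]_(m, n)) (c : R) :
  0 <= c -> opbound2 M (c ^+ 2)%:C -> opnorm M <= c.
Proof.
move=> c0 Mc; have [[v v1]|nov] := pselect (exists v : 'cV[C]_n, fnorm v = 1).
  apply: ge_sup; first by exists (fnorm (M *m v)), v.
  move=> _ [w /= w1 <-]; have := Mc w.
  by rewrite (fnorm2_unit w1) mulr1 -sqr_fnorm lecR ler_pXn2r ?nnegrE ?fnorm_ge0.
by rewrite opnorm_no_unit.
Qed.

Lemma opnorm_adjmx m n (M : 'M[C]_(m, n)) : opnorm (adjmx M) = opnorm M.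
Proof.
have adj_le k l (N : 'M[C]_(k, l)) : opnorm (adjmx N) <= opnorm N.
  apply: opnorm_le (opnorm_ge0 _) (opbound2_adjmx _ (opbound2_opnorm N)).
  by rewrite ler0c exprn_ge0 ?opnorm_ge0.
by apply/le_anti; rewrite adj_le -{1}[M]adjmx_invol adj_le.
Qed.

Lemma opnorm_conjmx m n (M : 'M[C]_(m, n)) : opnorm (conjmx M) = opnorm M.
Proof.
have conj_le k l (N : 'M[C]_(k, l)) : opnorm (conjmx N) <= opnorm N.
  exact: opnorm_le (opnorm_ge0 _) (opbound2_conjmx (opbound2_opnorm N)).
by apply/le_anti; rewrite conj_le -{1}[M]conjmx_invol conj_le.
Qed.

End OperatorNorm.

Section GramEstimate.
Variable R : realType.
Local Notation C := R[i].

Definition colsmx {D N} (u : 'I_N -> 'cV[C]_D) : 'M[C]_(D, N) := \matrix_(r, i) u i r 0.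

Lemma fnorm2_sum_tens N D1 D2 (u : 'I_N -> 'cV[C]_D1) (v : 'I_N -> 'cV[C]_D2)
    (F : 'M[C]_N) :
  fnorm2 (\sum_i \sum_j F i j *: (conjmx (u i) *t v j))
  = fnorm2 (conjmx (colsmx u) *m F *m (colsmx v)^T).
Proof.
rewrite /fnorm2 sum_mxtens_index; apply: eq_bigr => r _; apply: eq_bigr => s _.
rewrite sum_mxtens_index !big_ord1; congr (`|_| ^+ 2).
rewrite summxE; under eq_bigr do rewrite summxE.
rewrite exchange_big [RHS]mxE; apply: eq_bigr => j _.
rewrite [in RHS]mxE mulr_suml; apply: eq_bigr => i _.
by rewrite mxE tensmxE !conjmxE !mxE mulrA [F i j * _]mulrC.
Qed.

Lemma fnorm2_gram N D (u : 'I_N -> 'cV[C]_D) :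
  fnorm2 ((colsmx u)^T *m conjmx (colsmx u)) = fnorm2 (\sum_i conjmx (u i) *t u i).
Proof.
rewrite -adjmx_tr fnorm2_mul_adjmx adjmx_tr -[conjmx _]mulmx1 -fnorm2_sum_tens.
congr fnorm2; apply: eq_bigr => i _.
rewrite (bigD1 i) //= big1 => [|j /negbTE ji]; first by rewrite mxE eqxx scale1r addr0.
by rewrite mxE eq_sym ji scale0r.
Qed.

Lemma fnorm2_sandwich_le D1 D2 N (U : 'M[C]_(D1, N)) (V : 'M[C]_(D2, N))
    (F : 'M[C]_N) f :
  0 <= f -> opbound2 (adjmx F) f ->
  fnorm2 (conjmx U *m F *m V^T) ^+ 2
  <= f ^+ 2 * fnorm2 (U^T *m conjmx U) * fnorm2 (V^T *m conjmx V).
Proof.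
move=> f0 Ff; set G := U^T *m conjmx U; set H := V^T *m conjmx V.
have trE : fnorm2 (conjmx U *m F *m V^T) = \tr (adjmx F *m G *m F *m H).
  rewrite fnorm2_mxtrace !adjmx_mul adjmx_tr adjmx_conj /G /H -!mulmxA.
  by rewrite mxtrace_mulC !mulmxA.
have FGF : fnorm2 (adjmx F *m G *m F) <= f ^+ 2 * fnorm2 G.
  rewrite -mulmxA; apply: le_trans (opbound2_mulmx _ Ff) _.
  by rewrite expr2 -mulrA ler_wpM2l // opbound2_mulmxr.
rewrite -[X in X ^+ 2]ger0_norm ?fnorm2_ge0 // trE.
apply: le_trans (normC_mxtrace_mul_le _ _) _.
by rewrite ler_wpM2r ?fnorm2_ge0.
Qed.

Lemma fnorm2_sum_tens_le N D1 D2 (u : 'I_N -> 'cV[C]_D1) (v : 'I_N -> 'cV[C]_D2)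
    (F : 'M[C]_N) f :
  0 <= f -> opbound2 (adjmx F) f ->
  fnorm2 (\sum_i \sum_j F i j *: (conjmx (u i) *t v j)) ^+ 2
  <= f ^+ 2 * fnorm2 (\sum_i conjmx (u i) *t u i) * fnorm2 (\sum_i conjmx (v i) *t v i).
Proof. by rewrite fnorm2_sum_tens -!fnorm2_gram; exact: fnorm2_sandwich_le. Qed.

End GramEstimate.

Section TensorOperator.
Variable R : realType.
Local Notation C := R[i].

Definition EFfam {N D1 D2} (a : 'I_N -> 'M[C]_D1) (b : 'I_N -> 'M[C]_D2)
    (F : 'M[C]_N) : 'M[C]_(D1 * D2) :=
  \sum_i \sum_j F i j *: (conjmx (a i) *t b j).

Lemma EFfam_mul_tens N D1 D2 (a : 'I_N -> 'M[C]_D1) (b : 'I_N -> 'M[C]_D2) F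
    (x : 'cV[C]_D1) (y : 'cV[C]_D2) :
  EFfam a b F *m (x *t y)
  = \sum_i \sum_j F i j *: (conjmx (a i *m conjmx x) *t (b j *m y)).
Proof.
rewrite mulmx_suml; apply: eq_bigr => i _; rewrite mulmx_suml; apply: eq_bigr => j _.
by rewrite -scalemxAl tensmx_mul conjmx_mul conjmx_invol.
Qed.

Lemma transfer_mul_tens N D (a : 'I_N -> 'M[C]_D) (x : 'cV[C]_D) :
  transfer a *m (conjmx x *t x) = \sum_i conjmx (a i *m x) *t (a i *m x).
Proof. by rewrite mulmx_suml; apply: eq_bigr => i _; rewrite tensmx_mul conjmx_mul. Qed.

Lemma fnorm2_transfer_tens_le N D (a : 'I_N -> 'M[C]_D) (x : 'cV[C]_D) :
  fnorm2 x = 1 ->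
  fnorm2 (\sum_i conjmx (a i *m x) *t (a i *m x)) <= (opnorm (transfer a) ^+ 2)%:C.
Proof.
move=> x1; rewrite -transfer_mul_tens; apply: le_trans (opbound2_opnorm _ _) _.
by rewrite (fnorm2_tens (conjmx x) x) fnorm2_conj x1 !mulr1.
Qed.

Lemma fnorm_EFfam_tens_le N D1 D2 (a : 'I_N -> 'M[C]_D1) (b : 'I_N -> 'M[C]_D2) F
    (x : 'cV[C]_D1) (y : 'cV[C]_D2) :
  fnorm x = 1 -> fnorm y = 1 ->
  fnorm (EFfam a b F *m (x *t y))
  <= opnorm F * Num.sqrt (opnorm (transfer a) * opnorm (transfer b)).
Proof.
move=> x1 y1; set f := (opnorm F ^+ 2)%:C.
have f0 : 0 <= f by rewrite ler0c exprn_ge0 ?opnorm_ge0.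
have gram_a := fnorm2_transfer_tens_le a (etrans (fnorm2_conj x) (fnorm2_unit x1)).
have gram_b := fnorm2_transfer_tens_le b (fnorm2_unit y1).
have W_le : fnorm2 (EFfam a b F *m (x *t y)) ^+ 2
    <= f ^+ 2 * (opnorm (transfer a) ^+ 2)%:C * (opnorm (transfer b) ^+ 2)%:C.
  rewrite EFfam_mul_tens.
  apply: le_trans (fnorm2_sum_tens_le _ _ f0 (opbound2_adjmx f0 (opbound2_opnorm F))) _.
  apply: ler_pM; rewrite ?mulr_ge0 ?exprn_ge0 ?fnorm2_ge0 //.
  by rewrite ler_wpM2l ?exprn_ge0.
apply: ler_mul_sqrt_exp4; rewrite ?fnorm_ge0 ?opnorm_ge0 //.
by move: W_le; rewrite -sqr_fnorm -!rmorphXn -!rmorphM lecR -!exprM.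
Qed.

Lemma adjmx_EFfam N D1 D2 (a : 'I_N -> 'M[C]_D1) (b : 'I_N -> 'M[C]_D2) F :
  adjmx (EFfam a b F) = EFfam (fun i => adjmx (a i)) (fun j => adjmx (b j)) (conjmx F).
Proof.
rewrite adjmx_sum; apply: eq_bigr => i _; rewrite adjmx_sum; apply: eq_bigr => j _.
by rewrite adjmx_scale adjmx_tens conjmxE adjmx_conj conjmx_adj.
Qed.

Lemma adjmx_transfer N D (a : 'I_N -> 'M[C]_D) :
  adjmx (transfer a) = transfer (fun i => adjmx (a i)).
Proof.
rewrite adjmx_sum; apply: eq_bigr => i _.
by rewrite adjmx_tens adjmx_conj conjmx_adj.
Qed.

End TensorOperator.

Section MultiIndex.
Variables (R : realType) (p d : nat).
Local Notation C := R[i].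

Definition unmidx (i : 'I_(p ^ d)) : {ffun 'I_d -> 'I_p} :=
  enum_val (cast_ord (esym (card_multi_index p d)) i).

Lemma midxK : cancel midx unmidx.
Proof. by move=> m; rewrite /midx /unmidx cast_ordK enum_rankK. Qed.

Lemma unmidxK : cancel unmidx midx.
Proof. by move=> i; rewrite /midx /unmidx enum_valK cast_ordKV. Qed.

Lemma unmidx_bij : bijective unmidx.
Proof. by exists midx; [exact: unmidxK | exact: midxK]. Qed.

Definition prodmx {D} (X : 'I_p -> 'M[C]_D) (i : 'I_(p ^ d)) : 'M[C]_D :=
  \prod_(k < d) X (unmidx i k).

Lemma EF_prodmx D1 D2 (A : 'I_p -> 'M[C]_D1) (B : 'I_p -> 'M[C]_D2) (F : 'M[C]_(p ^ d)) :
  EF A B F = EFfam (prodmx A) (prodmx B) F.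
Proof.
rewrite /EF (reindex unmidx) /=; last exact: onW_bij unmidx_bij.
apply: eq_bigr => i _; rewrite (reindex unmidx) /=; last exact: onW_bij unmidx_bij.
by apply: eq_bigr => j _; rewrite !unmidxK tensmx_prod conjmx_prod.
Qed.

Lemma transfer_exp D (X : 'I_p -> 'M[C]_D) : transfer X ^+ d = transfer (prodmx X).
Proof.
rewrite /transfer -{1}(card_ord d) -prodr_const bigA_distr_bigA.
rewrite (reindex unmidx) /=; last exact: onW_bij unmidx_bij.
by apply: eq_bigr => i _; rewrite tensmx_prod conjmx_prod.
Qed.

End MultiIndex.

Unset Implicit Arguments.

Theorem lemma6 (R : realType) (p D1 D2 : nat)
    (A : 'I_p -> 'M[R[i]]_D1) (B : 'I_p -> 'M[R[i]]_D2)
    (psi1 : 'cV[R[i]]_D1) (psi2 : 'cV[R[i]]_D2) :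
  fnorm psi1 = 1 -> fnorm psi2 = 1 ->
  forall (d : nat), (1 <= d)%N -> forall F : 'M[R[i]]_(p ^ d)%N,
    let K := opnorm F * Num.sqrt (opnorm (transfer A ^+ d) * opnorm (transfer B ^+ d)) in
    [/\ fnorm (adjmx (EF A B F) *m (psi1 *t psi2)) <= K,
        fnorm (EF A B F *m (psi1 *t psi2)) <= K
      & fnorm (EF A B F) <= (D1 * D2)%:R * K].
Proof.
(* the bounds hold for d = 0 as well *)
move=> psi1_1 psi2_1 d _ F K.
have EF_le (x : 'cV[R[i]]_D1) (y : 'cV[R[i]]_D2) :
    fnorm x = 1 -> fnorm y = 1 -> fnorm (EF A B F *m (x *t y)) <= K.
  by move=> x1 y1; rewrite /K !transfer_exp EF_prodmx; exact: fnorm_EFfam_tens_le.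
split.
- rewrite /K -opnorm_conjmx !transfer_exp -(opnorm_adjmx (transfer (prodmx A))).
  rewrite -(opnorm_adjmx (transfer (prodmx B))) !adjmx_transfer EF_prodmx adjmx_EFfam.
  exact: fnorm_EFfam_tens_le psi1_1 psi2_1.
- exact: EF_le.
- apply: fnorm_le_col => [|k]; first by rewrite mulr_ge0 ?opnorm_ge0 ?sqrtr_ge0.
  case: (mxtens_indexP k) => r s; rewrite colE -tensmx_delta.
  by apply: EF_le; exact: fnorm_delta.
Qed.
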